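(* Let $G$ be a finite simple graph with an initial configuration and let $u,v$ be adjacent vertices with $\deg(u)=2$ and $\deg(v)\in\{1,2\}$. Then for every integer $t\geq0$, $|c_{t+1}(u)-c_{t+1}(v)|\leq \max\{3,\ |c_t(u)-c_t(v)|\}$.
   Context: Diffusion process: for a configuration $c_t:V(G)\to\mathbb{Z}$, $c_{t+1}(w)=c_t(w)-|\{x\in N(w): c_t(w)>c_t(x)\}|+|\{x\in N(w): c_t(w)<c_t(x)\}|$ for all $w$ simultaneously. *)

From mathcomp Require Import all_boot all_order all_algebra.
Set Implicit Arguments. Unset Strict Implicit. Unset Printing Implicit Defensive.
Import Order.TTheory GRing.Theory Num.Theory.
Local Open Scope ring_scope.

Definition simple_graph (T : finType) (e : rel T) : Prop :=
  symmetric e /\ irreflexive e.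

Definition deg (T : finType) (e : rel T) (w : T) : nat := #|[set x | e w x]|.

Definition diffuse_step (T : finType) (e : rel T) (c : T -> int) : T -> int :=
  fun w => c w - (#|[set x | e w x && (c x < c w)]|)%:Z
               + (#|[set x | e w x && (c w < c x)]|)%:Z.

Definition config (T : finType) (e : rel T) (c0 : T -> int) (t : nat) : T -> int :=
  iter t (diffuse_step e) c0.

From mathcomp Require Import all_boot all_order all_algebra.
From mathcomp Require Import zify.
Set Implicit Arguments. Unset Strict Implicit. Unset Printing Implicit Defensive.
Import Order.TTheory GRing.Theory Num.Theory.
Local Open Scope ring_scope.

(* Along the edge uv, one diffusion step moves c(u) and c(v) one unit towards
   each other, so it shrinks their difference d by 2 sgz d; each remaining
   neighbour of u or of v perturbs the new difference by at most 1.  With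
   deg u = 2 and deg v <= 2 the perturbation is at most 2, which gives at most
   |d| when |d| >= 2, and at most 3 when |d| <= 1. *)

Section Diffusion.

Variables (T : finType) (e : rel T).

Lemma card_nbr_predD1 (w v : T) (P : pred T) : e w v ->
  #|[set x | e w x && P x]| = (P v + #|[set x | e w x && P x] :\ v|)%N.
Proof. by move=> ewv; rewrite (cardsD1 v) inE ewv. Qed.

Lemma leq_card_nbr_predD1 (w v : T) (P : pred T) : e w v ->
  (#|[set x | e w x && P x] :\ v| <= (deg e w).-1)%N.
Proof.
move=> ewv; rewrite /deg (cardsD1 v [set x | e w x]) inE ewv /=.
apply: subset_leq_card; apply/subsetP => x; rewrite !inE.
by case/andP=> -> /andP[-> _].
Qed.

Lemma diffuse_step_adj (c : T -> int) (w v : T) : e w v ->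
  `|diffuse_step e c w - (c w - (c v < c w)%R%:Z + (c w < c v)%R%:Z)|
    <= ((deg e w).-1)%:Z.
Proof.
move=> ewv; rewrite /diffuse_step.
rewrite (@card_nbr_predD1 w v (fun x => c x < c w) ewv).
rewrite (@card_nbr_predD1 w v (fun x => c w < c x) ewv).
have := @leq_card_nbr_predD1 w v (fun x => c x < c w) ewv.
have := @leq_card_nbr_predD1 w v (fun x => c w < c x) ewv.
rewrite !PoszD; lia.
Qed.

Lemma diffuse_step_adj_sub (c : T -> int) (u v : T) :
  symmetric e -> e u v ->
  `|diffuse_step e c u - diffuse_step e c v
    - (c u - c v - 2 * sgz (c u - c v))|
    <= ((deg e u).-1 + (deg e v).-1)%N%:Z.
Proof.
move=> esym euv; have evu : e v u by rewrite esym.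
have := diffuse_step_adj c euv; have := diffuse_step_adj c evu.
case: (ltgtP (c u) (c v)) => [lt_uv|lt_vu|->].
- by rewrite ltr0_sgz ?subr_lt0 //; lia.
- by rewrite gtr0_sgz ?subr_gt0 //; lia.
- by rewrite subrr sgz0; lia.
Qed.

End Diffusion.

Lemma contract2_le_max3 (d x : int) :
  `|x - (d - 2 * sgz d)| <= 2 -> `|x| <= Num.max 3 `|d|.
Proof. by case: sgzP; lia. Qed.

Theorem lemma6 (T : finType) (e : rel T) (c0 : T -> int) (u v : T) :
  simple_graph e -> e u v ->
  deg e u = 2%N -> (deg e v = 1%N \/ deg e v = 2%N) ->
  forall t : nat,
    `|config e c0 t.+1 u - config e c0 t.+1 v| <=
      Num.max 3 `|config e c0 t u - config e c0 t v|.
Proof.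
move=> [esym _] euv du dv t; rewrite /config iterS -/(config e c0 t).
apply: contract2_le_max3; apply: le_trans (diffuse_step_adj_sub _ esym euv) _.
by rewrite du; case: dv => ->.
Qed.
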